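(* Let $B\ge 0$, $E>0$ and $L>0$ be constants, and on the domain $\{(r,\theta)\,:\, r>1,\ 0<\theta<\pi\}$ define $$U(r,\theta)=\frac{L^2\Lambda^2}{2r^2\sin^2\theta}-\frac{E^2}{2\Lambda^2\Gamma},\qquad \Lambda=1+\frac{B^2}{4}r^2\sin^2\theta,\qquad \Gamma=1-\frac1r .$$ If $(r_c,\theta_c)$ is a critical point of $U$ in this domain, i.e. $\partial U/\partial r=\partial U/\partial\theta=0$ at $(r_c,\theta_c)$, then $\theta_c=\pi/2$. Consequently every fixed point of the Hamiltonian system with Hamiltonian $$H=\frac{\Gamma}{2\Lambda^2}p_r^2+\frac{p_\theta^2}{2r^2\Lambda^2}+U(r,\theta)$$ on $\{(p_r,p_\theta,r,\theta): r>1,\ 0<\theta<\pi\}$ has $p_r=p_\theta=0$ and $\theta=\pi/2$ (it corresponds to a circular orbit in the equatorial plane).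
   Context: This is the reduced (after elimination of the cyclic coordinates $t,\varphi$) Hamiltonian system for time-like geodesics of neutral particles in the Schwarzschild–Melvin spacetime, in dimensionless units where the horizon is $r=1$; $E$ is the energy, $L$ the angular momentum about the symmetry axis, and $B$ the dimensionless magnetic field parameter. The canonical variables are $(p_r,p_\theta,r,\theta)$ with $\dot r=\partial H/\partial p_r$, $\dot\theta=\partial H/\partial p_\theta$, $\dot p_r=-\partial H/\partial r$, $\dot p_\theta=-\partial H/\partial\theta$. *)

From Stdlib Require Import Reals.
From Coquelicot Require Import Coquelicot.
Open Scope R_scope.

Definition Lam (B r th : R) : R := 1 + B ^ 2 / 4 * r ^ 2 * (sin th) ^ 2.

Definition Gam (r : R) : R := 1 - 1 / r.

Definition Upot (B E L r th : R) : R :=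
  L ^ 2 * (Lam B r th) ^ 2 / (2 * r ^ 2 * (sin th) ^ 2)
  - E ^ 2 / (2 * (Lam B r th) ^ 2 * Gam r).

Definition Ham (B E L pr pth r th : R) : R :=
  Gam r / (2 * (Lam B r th) ^ 2) * pr ^ 2
  + pth ^ 2 / (2 * r ^ 2 * (Lam B r th) ^ 2)
  + Upot B E L r th.

Definition in_domain (r th : R) : Prop := 1 < r /\ 0 < th < PI.

Definition critical_point_U (B E L rc thc : R) : Prop :=
  is_derive (fun r => Upot B E L r thc) rc 0 /\
  is_derive (fun th => Upot B E L rc th) thc 0.

(* Fixed point of the Hamiltonian flow:
   rdot = dH/dp_r = 0, thetadot = dH/dp_theta = 0,
   p_r dot = -dH/dr = 0, p_theta dot = -dH/dtheta = 0. *)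
Definition fixed_point_H (B E L pr pth r th : R) : Prop :=
  is_derive (fun x => Ham B E L x pth r th) pr 0 /\
  is_derive (fun x => Ham B E L pr x r th) pth 0 /\
  is_derive (fun x => Ham B E L pr pth x th) r 0 /\
  is_derive (fun x => Ham B E L pr pth r x) th 0.

(** [U] depends on [θ] only through [w = sin² θ], say [U = V(r, w)],
    and [Λ] depends on [(r, w)] only through [r² w]. The dilation [r ↦ λ r],
    [w ↦ w / λ²] therefore fixes every term of [V] except the factor [1/Γ],
    which gives the identity
    [r ∂_r V - 2 w ∂_w V = E² / (2 r Λ² Γ²) > 0].
    Since [∂_θ U = 2 sin θ cos θ ∂_w V], a critical point of [U] with
    [cos θ <> 0] would make the left-hand side vanish. For the Hamiltonian,
    [H] is a positive definite quadratic form in [(p_r, p_θ)] plus [U], so a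
    fixed point has [p_r = p_θ = 0] and is a critical point of [U]. *)

From Stdlib Require Import Reals Lra.
From Coquelicot Require Import Coquelicot.
Open Scope R_scope.

Definition Lamw (B r w : R) : R := 1 + B ^ 2 / 4 * r ^ 2 * w.

Definition Vpot (B E L r w : R) : R :=
  L ^ 2 * (Lamw B r w) ^ 2 / (2 * r ^ 2 * w)
  - E ^ 2 / (2 * (Lamw B r w) ^ 2 * Gam r).

Lemma Upot_Vpot (B E L r th : R) : Upot B E L r th = Vpot B E L r (sin th ^ 2).
Proof. reflexivity. Qed.

Lemma Lamw_pos (B r w : R) : 0 <= w -> 0 < Lamw B r w.
Proof.
  intros hw. unfold Lamw.
  pose proof (pow2_ge_0 B). pose proof (pow2_ge_0 r).
  assert (0 <= B ^ 2 / 4 * r ^ 2 * w) by (apply Rmult_le_pos; [apply Rmult_le_pos |]; lra).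
  lra.
Qed.

Lemma Lam_pos (B r th : R) : 0 < Lam B r th.
Proof. apply (Lamw_pos B r (sin th ^ 2)), pow2_ge_0. Qed.

Lemma Gam_pos (r : R) : 1 < r -> 0 < Gam r.
Proof.
  intros hr. unfold Gam.
  assert (1 / r < 1) by (apply (Rmult_lt_reg_r r); [lra | field_simplify; lra]).
  lra.
Qed.

Lemma is_derive_eq (f : R -> R) (x l1 l2 : R) :
  is_derive f x l1 -> is_derive f x l2 -> l1 = l2.
Proof.
  intros h1 h2. rewrite <- (is_derive_unique _ _ _ h1). exact (is_derive_unique _ _ _ h2).
Qed.

Lemma quadratic_critical_point (f : R -> R) (a b p : R) :
  a <> 0 -> (forall x, f x = a * x ^ 2 + b) -> is_derive f p 0 -> p = 0.
Proof.
  intros ha hf hd.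
  assert (hd' : is_derive f p (2 * a * p)).
  { apply (is_derive_ext (fun x => a * x ^ 2 + b)); [intros x; symmetry; apply hf |].
    auto_derive; [exact I | ring]. }
  pose proof (is_derive_eq _ _ _ _ hd' hd) as h.
  apply Rmult_integral in h as [h | h]; [| exact h].
  apply Rmult_integral in h as [h | h]; lra.
Qed.

Lemma cos_eq_0_0_PI (th : R) : 0 < th < PI -> cos th = 0 -> th = PI / 2.
Proof.
  intros hth hc. apply cos_inj; try lra.
  rewrite cos_PI2. exact hc.
Qed.

Section EffectivePotential.

Variables B E L : R.

Lemma is_derive_Vpot_r (r w : R) : 1 < r -> 0 < w ->
  is_derive (fun x => Vpot B E L x w) r
    (L ^ 2 * Lamw B r w * (B ^ 2 / 4 * r ^ 2 * w - 1) / (w * r ^ 3)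
     + E ^ 2 * (B ^ 2 * r * w / (2 * Lamw B r w ^ 3 * Gam r)
                + 1 / (2 * r ^ 2 * Lamw B r w ^ 2 * Gam r ^ 2))).
Proof.
  intros hr hw.
  pose proof (Lamw_pos B r w (Rlt_le _ _ hw)) as hLa.
  pose proof (Gam_pos r hr) as hG.
  unfold Vpot, Lamw, Gam in *.
  auto_derive.
  - repeat split; repeat apply Rmult_integral_contrapositive_currified; simpl; lra.
  - field. repeat split; lra.
Qed.

Lemma is_derive_Vpot_w (r w : R) : 1 < r -> 0 < w ->
  is_derive (fun v => Vpot B E L r v) w
    (L ^ 2 * Lamw B r w * (B ^ 2 / 4 * r ^ 2 * w - 1) / (2 * r ^ 2 * w ^ 2)
     + E ^ 2 * (B ^ 2 / 4 * r ^ 2) / (Gam r * Lamw B r w ^ 3)).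
Proof.
  intros hr hw.
  pose proof (Lamw_pos B r w (Rlt_le _ _ hw)) as hLa.
  pose proof (Gam_pos r hr) as hG.
  unfold Vpot, Lamw, Gam in *.
  auto_derive.
  - repeat split; repeat apply Rmult_integral_contrapositive_currified; simpl; lra.
  - field. repeat split; lra.
Qed.

Lemma Vpot_dilation_identity (r w dr dw : R) : 1 < r -> 0 < w ->
  is_derive (fun x => Vpot B E L x w) r dr ->
  is_derive (fun v => Vpot B E L r v) w dw ->
  r * dr - 2 * w * dw = E ^ 2 / (2 * r * Lamw B r w ^ 2 * Gam r ^ 2).
Proof.
  intros hr hw hdr hdw.
  pose proof (Lamw_pos B r w (Rlt_le _ _ hw)) as hLa.
  pose proof (Gam_pos r hr) as hG.
  rewrite <- (is_derive_eq _ _ _ _ (is_derive_Vpot_r r w hr hw) hdr).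
  rewrite <- (is_derive_eq _ _ _ _ (is_derive_Vpot_w r w hr hw) hdw).
  field. repeat split; lra.
Qed.

Lemma is_derive_Upot_th (r th dw : R) :
  is_derive (fun v => Vpot B E L r v) (sin th ^ 2) dw ->
  is_derive (fun x => Upot B E L r x) th (2 * sin th * cos th * dw).
Proof.
  intros hdw.
  apply (is_derive_ext (fun x => Vpot B E L r (sin x ^ 2))).
  { intros x. exact (eq_sym (Upot_Vpot B E L r x)). }
  apply (is_derive_comp (fun v => Vpot B E L r v) (fun x => sin x ^ 2)).
  - exact hdw.
  - auto_derive; [exact I | ring].
Qed.

Lemma Upot_critical_point_cos_eq_0 (r th : R) : E <> 0 -> 1 < r -> 0 < sin th ->
  critical_point_U B E L r th -> cos th = 0.
Proof.
  intros hE hr hs [hdr hdth].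
  set (w := sin th ^ 2).
  assert (hw : 0 < w) by (apply pow_lt; exact hs).
  assert (hex : exists dw, is_derive (fun v => Vpot B E L r v) w dw)
    by (eexists; apply is_derive_Vpot_w; assumption).
  destruct hex as [dw hdw].
  pose proof (is_derive_eq _ _ _ _ (is_derive_Upot_th r th dw hdw) hdth) as hth.
  destruct (Req_dec (cos th) 0) as [hc | hc]; [exact hc | exfalso].
  assert (hdw0 : dw = 0).
  { apply Rmult_integral in hth as [h | h]; [| exact h].
    apply Rmult_integral in h as [h | h]; lra. }
  rewrite hdw0 in hdw.
  pose proof (Vpot_dilation_identity r w 0 0 hr hw hdr hdw) as hid.
  pose proof (Lamw_pos B r w (Rlt_le _ _ hw)) as hLa.
  pose proof (Gam_pos r hr) as hG.
  assert (0 < E ^ 2 / (2 * r * Lamw B r w ^ 2 * Gam r ^ 2)).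
  { apply Rdiv_lt_0_compat; [apply pow2_gt_0; exact hE |].
    repeat apply Rmult_lt_0_compat; try apply pow_lt; lra. }
  lra.
Qed.

Lemma Upot_critical_point_equatorial (r th : R) : E <> 0 -> in_domain r th ->
  critical_point_U B E L r th -> th = PI / 2.
Proof.
  intros hE [hr hth] hcrit.
  apply cos_eq_0_0_PI; [exact hth |].
  apply (Upot_critical_point_cos_eq_0 r th hE hr); [apply sin_gt_0; lra | exact hcrit].
Qed.

Lemma Ham_fixed_point_momenta (pr pth r th : R) : 1 < r ->
  fixed_point_H B E L pr pth r th -> pr = 0 /\ pth = 0.
Proof.
  intros hr [hpr [hpth _]].
  pose proof (Lam_pos B r th) as hLa.
  pose proof (Gam_pos r hr) as hG.
  split.
  - apply (quadratic_critical_point (fun x => Ham B E L x pth r th)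
             (Gam r / (2 * Lam B r th ^ 2)) (pth ^ 2 / (2 * r ^ 2 * Lam B r th ^ 2) + Upot B E L r th)).
    + apply Rgt_not_eq, Rdiv_lt_0_compat; [lra | apply Rmult_lt_0_compat, pow_lt; lra].
    + intros x. unfold Ham. ring.
    + exact hpr.
  - apply (quadratic_critical_point (fun x => Ham B E L pr x r th)
             (/ (2 * r ^ 2 * Lam B r th ^ 2)) (Gam r / (2 * Lam B r th ^ 2) * pr ^ 2 + Upot B E L r th)).
    + apply Rgt_not_eq, Rinv_0_lt_compat.
      repeat apply Rmult_lt_0_compat; try apply pow_lt; lra.
    + intros x. unfold Ham, Rdiv. ring.
    + exact hpth.
Qed.

Lemma Ham_zero_momenta (r th : R) : Ham B E L 0 0 r th = Upot B E L r th.
Proof. unfold Ham, Rdiv. ring. Qed.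

End EffectivePotential.

Theorem mainTheorem1 (B E L : R) (hB : 0 <= B) (hE : 0 < E) (hL : 0 < L) :
  (forall rc thc : R, in_domain rc thc ->
     critical_point_U B E L rc thc -> thc = PI / 2) /\
  (forall pr pth r th : R, in_domain r th ->
     fixed_point_H B E L pr pth r th ->
     pr = 0 /\ pth = 0 /\ th = PI / 2).
Proof.
  assert (hE0 : E <> 0) by lra.
  split.
  - intros rc thc. exact (Upot_critical_point_equatorial B E L rc thc hE0).
  - intros pr pth r th hdom hfix.
    destruct (Ham_fixed_point_momenta B E L pr pth r th (proj1 hdom) hfix) as [-> ->].
    repeat split.
    apply (Upot_critical_point_equatorial B E L r th hE0 hdom).
    destruct hfix as [_ [_ [hdr hdth]]].
    split; eapply is_derive_ext; try eassumption; intros; apply Ham_zero_momenta.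
Qed.
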